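(* Let $\rho_{\Delta_{S-1}}=\max_{\boldsymbol{q},\boldsymbol{q}'\in\Delta_{S-1}}\|\boldsymbol{q}-\boldsymbol{q}'\|_2$ be the diameter of the simplex $\Delta_{S-1}$. Let $\boldsymbol{q}^*=\arg\min_{\boldsymbol{q}\in\Delta_{S-1}}\boldsymbol{q}^\top\Gamma\boldsymbol{q}-\boldsymbol{q}^\top\boldsymbol{d}$ and $\hat{\boldsymbol{q}}=\arg\min_{\boldsymbol{q}\in\Delta_{S-1}}\boldsymbol{q}^\top\widehat\Gamma\boldsymbol{q}-\boldsymbol{q}^\top\hat{\boldsymbol{d}}$. If $\lambda_{\min}(\Gamma)>0$, then \[ \|\hat{\boldsymbol{q}}-\boldsymbol{q}^*\|_2\le\frac{S\big(\|\widehat\Gamma-\Gamma\|_\infty+\tfrac12\|\hat{\boldsymbol{d}}-\boldsymbol{d}\|_\infty\big)}{\lambda_{\min}(\Gamma)}\wedge\rho_{\Delta_{S-1}}, \] where $\|\widehat\Gamma-\Gamma\|_\infty$ is the element-wise maximum absolute entry of the matrix and $\|\hat{\boldsymbol{d}}-\boldsymbol{d}\|_\infty$ the $\ell_\infty$ norm of the vector.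
   Context: $\Delta_{S-1}=\{\boldsymbol{q}\in\mathbb{R}^S:\sum_s q_s=1,\ \min_s q_s\ge0\}$. Functions $\tau^{(1)},\ldots,\tau^{(S)}$ are square integrable with respect to a probability distribution $Q_{\boldsymbol{X}}$, and $\Gamma$ is the $S\times S$ matrix $\Gamma_{k,l}=\mathbb{E}_{Q_{\boldsymbol{X}}}[\tau^{(k)}(\boldsymbol{X})\tau^{(l)}(\boldsymbol{X})]$ with diagonal vector $\boldsymbol{d}=(\Gamma_{1,1},\ldots,\Gamma_{S,S})^\top$. Given functions $\hat\tau^{(1)},\ldots,\hat\tau^{(S)}$ (estimators of the $\tau^{(s)}$) and points $\boldsymbol{X}^Q_1,\ldots,\boldsymbol{X}^Q_{n_Q}$, define $\widehat\Gamma_{k,l}=\frac{1}{n_Q}\sum_{i=1}^{n_Q}\hat\tau^{(k)}(\boldsymbol{X}^Q_i)\hat\tau^{(l)}(\boldsymbol{X}^Q_i)$ and $\hat d_s=\frac{1}{n_Q}\sum_{i=1}^{n_Q}(\hat\tau^{(s)}(\boldsymbol{X}^Q_i))^2$ (so $\hat{\boldsymbol{d}}$ is the diagonal of $\widehat\Gamma$). $\lambda_{\min}(\Gamma)$ is the smallest eigenvalue of $\Gamma$. *)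

From HB Require Import structures.
From mathcomp Require Import all_boot all_order all_algebra.
From mathcomp Require Import all_classical all_reals all_analysis.
Set Implicit Arguments. Unset Strict Implicit. Unset Printing Implicit Defensive.
Import Order.TTheory GRing.Theory Num.Theory.
Local Open Scope ring_scope.

Definition simplex (R : realType) (S : nat) : set 'cV[R]_S :=
  [set q | (\sum_(s < S) q s ord0 = 1) /\ (forall s, 0 <= q s ord0)].

Definition norm2 (R : realType) (S : nat) (v : 'cV[R]_S) : R :=
  Num.sqrt (\sum_(s < S) v s ord0 ^+ 2).

Definition vnorm_inf (R : realType) (S : nat) (v : 'cV[R]_S) : R :=
  \big[Num.max/0]_(s < S) `|v s ord0|.

Definition mnorm_inf (R : realType) (S : nat) (A : 'M[R]_S) : R :=
  \big[Num.max/0]_(k < S) \big[Num.max/0]_(l < S) `|A k l|.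

Definition simplex_diam (R : realType) (S : nat) : R :=
  sup [set r : R | exists q q' : 'cV[R]_S, [/\ @simplex R S q, @simplex R S q' & r = norm2 (q - q')]].

Definition qobj (R : realType) (S : nat) (G : 'M[R]_S) (d : 'cV[R]_S)
  (q : 'cV[R]_S) : R :=
  (q^T *m G *m q) ord0 ord0 - (q^T *m d) ord0 ord0.

Definition is_argmin_simplex (R : realType) (S : nat) (G : 'M[R]_S)
  (d : 'cV[R]_S) (q : 'cV[R]_S) : Prop :=
  @simplex R S q /\ forall q', @simplex R S q' -> qobj G d q <= qobj G d q'.

Definition is_lambda_min (R : realType) (S : nat) (A : 'M[R]_S) (lam : R)
  : Prop :=
  eigenvalue A lam /\ forall a, eigenvalue A a -> lam <= a.

(* Population Gram matrix Gamma_{k,l} = E_Q[tau^(k)(X) tau^(l)(X)] *)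
Definition Gram (d : measure_display) (T : measurableType d) (R : realType)
  (P : probability T R) (S : nat) (tau : 'I_S -> T -> R) : 'M[R]_S :=
  \matrix_(k, l) Rintegral P setT (fun x => tau k x * tau l x).

Definition emp_Gram (T : Type) (R : realType) (S n : nat)
  (tauh : 'I_S -> T -> R) (X : 'I_n -> T) : 'M[R]_S :=
  \matrix_(k, l) (n%:R^-1 * \sum_(i < n) tauh k (X i) * tauh l (X i)).

Definition diagv (R : realType) (S : nat) (A : 'M[R]_S) : 'cV[R]_S :=
  \col_s A s s.

From HB Require Import structures.
From mathcomp Require Import all_boot all_order all_algebra.
From mathcomp Require Import all_classical all_reals all_analysis.
From mathcomp Require Import ring lra.

(* Write D := q̂ - q*. The first-order optimality conditions of the two
   quadratic programs, each tested at the other program's minimizer, add up to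
     D^T Γ D <= (‖Γ̂ - Γ‖∞ + ‖d̂ - d‖∞ / 2) ‖D‖₁,
   because ‖q̂‖₁ = 1. The left-hand side is at least λ_min(Γ) ‖D‖₂²: the
   quadratic form attains its minimum on the compact unit sphere, and a
   minimizer is an eigenvector for the minimum value. Together with
   ‖D‖₁ <= S ‖D‖₂ this gives ‖D‖₂ <= S (‖Γ̂ - Γ‖∞ + ‖d̂ - d‖∞ / 2) / λ_min(Γ);
   the other bound holds because q̂ and q* both lie in the simplex. *)

Set Implicit Arguments.
Unset Strict Implicit.
Unset Printing Implicit Defensive.
Import Order.TTheory GRing.Theory Num.Theory numFieldNormedType.Exports.
Local Open Scope ring_scope.

(* Quadratic forms act on row vectors, the convention of [eigenvalue]; the
   column vectors of the statement enter through [q^T]. *)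
Local Notation "''[' u , v ]_ A" := (form idfun A u v).
Local Notation "''[' u ]_ A" := (form idfun A u u).
Local Notation "''[' u ]" := (form idfun 1%:M u u).

Lemma ge0_from_affine_right (R : realFieldType) (a b : R) :
  (forall t, 0 < t <= 1 -> 0 <= a + t * b) -> 0 <= a.
Proof.
move=> affine_ge0; rewrite leNgt; apply/negP => a_lt0.
have den_gt0 : 0 < `|b| - a by rewrite subr_gt0 (lt_le_trans a_lt0).
(* This [t] makes [a + t * `|b|] equal to [t * a < 0]. *)
pose t := - a / (`|b| - a).
have t_gt0 : 0 < t by rewrite divr_gt0 // oppr_gt0.
have t_den : t * (`|b| - a) = - a by rewrite divfK // gt_eqF.
have t_le1 : t <= 1 by rewrite ler_pdivrMr // mul1r lerDr.
have tb_le : t * b <= t * `|b| by apply: ler_wpM2l; [exact: ltW | exact: ler_norm].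
have ta_lt0 : t * a < 0 by rewrite pmulr_rlt0.
have := affine_ge0 t; rewrite t_gt0 t_le1 mulrBr in t_den * => /(_ isT); lra.
Qed.

Lemma sqr_le_mul_bound (R : realFieldType) (lam K s x a : R) :
  0 < lam -> 0 <= K -> 0 <= s -> 0 <= x ->
  lam * x ^+ 2 <= K * a -> a <= s * x -> x <= s * K / lam.
Proof.
move=> lam_gt0 K_ge0 s_ge0; rewrite le_eqVlt => /predU1P[<- _ _|x_gt0 quad lin].
  by apply: divr_ge0; [exact: mulr_ge0 | exact: ltW].
have : K * a <= K * (s * x) by apply: ler_wpM2l.
by rewrite ler_pdivlMr // -(ler_pM2r x_gt0); nra.
Qed.

Section BilinearForm.
Variables (R : realFieldType) (n : nat).
Implicit Types (A B : 'M[R]_n) (u v : 'rV[R]_n).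

Lemma form_mulmx A u v : '[u, v]_A = (u *m A *m v^T) 0 0.
Proof. by rewrite /form map_mx_id. Qed.

Lemma formE A u v : '[u, v]_A = \sum_i \sum_j u 0 i * A i j * v 0 j.
Proof.
rewrite form_mulmx mxE exchange_big /=; apply: eq_bigr => j _.
by rewrite mxE big_distrl /=; apply: eq_bigr => i _; rewrite !mxE.
Qed.

Lemma form_sym A u v : A^T = A -> '[u, v]_A = '[v, u]_A.
Proof.
move=> symA; rewrite !formE exchange_big /=.
apply: eq_bigr => i _; apply: eq_bigr => j _.
by rewrite -[in RHS]symA mxE; ring.
Qed.

Lemma formBmx A B u v : '[u, v]_(A - B) = '[u, v]_A - '[u, v]_B.
Proof. by rewrite !form_mulmx mulmxBr mulmxBl !mxE. Qed.

Lemma form_scalar_mx (a : R) u v : '[u, v]_(a%:M) = a * '[u, v]_(1%:M).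
Proof. by rewrite !form_mulmx mul_mx_scalar mulmx1 -scalemxAl mxE. Qed.

Lemma formZlr (a : R) A u : '[a *: u]_A = a ^+ 2 * '[u]_A.
Proof. by rewrite formZl formZr /= mulrA expr2. Qed.

Lemma form1E u : '[u] = \sum_i u 0 i ^+ 2.
Proof. by rewrite form_mulmx mulmx1 mxE; apply: eq_bigr => i _; rewrite mxE expr2. Qed.

Lemma form1_ge0 u : 0 <= '[u].
Proof. by rewrite form1E sumr_ge0 // => i _; rewrite sqr_ge0. Qed.

Lemma form1_eq0 u : ('[u] == 0) = (u == 0).
Proof.
apply/idP/eqP => [|->]; last by rewrite form0l.
rewrite form1E psumr_eq0 => [/allP u0|i _]; last exact: sqr_ge0.
apply/rowP => i; rewrite !mxE; apply/eqP; rewrite -sqrf_eq0.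
exact: u0 (mem_index_enum i).
Qed.

Lemma form1_gt0 u : u != 0 -> 0 < '[u].
Proof. by move=> u_neq0; rewrite lt_def form1_eq0 u_neq0 form1_ge0. Qed.

Lemma coord_sqr_le_form1 u i : u 0 i ^+ 2 <= '[u].
Proof. by rewrite form1E (bigD1 i) //= lerDl sumr_ge0 // => j _; rewrite sqr_ge0. Qed.

(* Moving [c] along [w := c *m B] changes ['[c]_B] by [-2 t '[w]] at first
   order, so positivity of the form forces [w = 0]. *)
Lemma psd_form_eq0 B c : B^T = B -> (forall u, 0 <= '[u]_B) -> '[c]_B = 0 -> c *m B = 0.
Proof.
move=> symB B_psd c0; pose w := c *m B.
have cw : '[c, w]_B = '[w] by rewrite !form_mulmx mulmx1.
have expand t : '[c - t *: w]_B = t ^+ 2 * '[w]_B - 2 * t * '[w].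
  rewrite formDl !formDr !formNl !formNr !formZl !formZr /=.
  by rewrite (form_sym w c symB) c0 cw; ring.
have w_le0 : '[w] <= 0.
  suff : 0 <= - 2 * '[w] by lra.
  apply: (ge0_from_affine_right (b := '[w]_B)) => t /andP[t_gt0 _].
  rewrite -(pmulr_rge0 _ t_gt0).
  have -> : t * (- 2 * '[w] + t * '[w]_B) = t ^+ 2 * '[w]_B - 2 * t * '[w] by ring.
  by rewrite -expand B_psd.
by apply/eqP; rewrite -form1_eq0 eq_le w_le0 form1_ge0.
Qed.

End BilinearForm.

Lemma sum_continuous (T : topologicalType) (K : numFieldType) (I : Type)
    (r : seq I) (F : I -> T -> K) :
  (forall i, continuous (F i)) -> continuous (\sum_(i <- r) F i).
Proof.
move=> F_cont; pose cont (f : T -> K) := continuous f.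
apply: (big_ind cont) => [|f g f_cont g_cont|i _]; first exact: cst_continuous.
  by move=> x; apply: continuousD; [exact: f_cont | exact: g_cont].
exact: F_cont.
Qed.

Section MinEigenvalue.
Variables (R : realType) (n : nat).
Implicit Types (A : 'M[R]_n) (u v c : 'rV[R]_n).

Lemma form_continuous A : continuous (fun u : 'rV[R]_n => '[u]_A).
Proof.
have -> : (fun u => '[u]_A) =
    \sum_i \sum_j (fun u : 'rV[R]_n => u 0 i * A i j * u 0 j).
  by apply/funext => u; rewrite formE fct_sumE; apply: eq_bigr => i _; rewrite fct_sumE.
apply: sum_continuous => i; apply: sum_continuous => j.
move=> u; apply: (@continuousM _ _ (fun u => u 0 i * A i j) (fun u => u 0 j)).
  apply: (@continuousM _ _ (fun u => u 0 i) (fun=> A i j)); first exact: coord_continuous.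
  exact: cst_continuous.
exact: coord_continuous.
Qed.

Lemma sphere_compact : compact [set u : 'rV[R]_n | '[u] = 1].
Proof.
apply: bounded_closed_compact.
  exists 1; split; first exact: num_real.
  move=> M M_gt1 u /= u1; rewrite [`|u|]/Num.norm /= mx_normrE; apply/bigmax_leP; split.
    by rewrite ltW // (lt_trans ltr01).
  move=> [i j] _ /=; rewrite (ord1 i); apply: le_trans (ltW M_gt1).
  by rewrite -(expr_le1 (ltn0Sn 1)) // real_normK ?num_real // -u1 coord_sqr_le_form1.
exact: (closed_comp (fun u _ => @form_continuous 1%:M u) (@closed_eq _ 1)).
Qed.

Lemma formZ_invsqrt A u : u != 0 -> '[(Num.sqrt '[u])^-1 *: u]_A = '[u]_A / '[u].
Proof.
by move=> u_neq0; rewrite formZlr exprVn sqr_sqrtr ?form1_ge0 // mulrC.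
Qed.

Lemma form_ge_sphere_min A c :
  (forall v, '[v] = 1 -> '[c]_A <= '[v]_A) -> forall u, '[c]_A * '[u] <= '[u]_A.
Proof.
move=> c_min u; have [->|u_neq0] := eqVneq u 0; first by rewrite !form0l mulr0.
rewrite -ler_pdivlMr ?form1_gt0 //; rewrite -formZ_invsqrt //.
by apply: c_min; rewrite formZ_invsqrt // mulfV // form1_eq0.
Qed.

Lemma eigenvalue_sphere_min A c : A^T = A -> '[c] = 1 ->
  (forall v, '[v] = 1 -> '[c]_A <= '[v]_A) -> eigenvalue A '[c]_A.
Proof.
move=> symA c1 c_min; set m := '[c]_A.
have B_sym : (A - m%:M)^T = A - m%:M by rewrite linearB /= tr_scalar_mx symA.
have B_psd u : 0 <= '[u]_(A - m%:M).
  by rewrite formBmx form_scalar_mx subr_ge0 form_ge_sphere_min.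
have cB0 : '[c]_(A - m%:M) = 0 by rewrite formBmx form_scalar_mx c1 mulr1 subrr.
apply/eigenvalueP; exists c.
  by apply/eqP; rewrite -subr_eq0 -mul_mx_scalar -mulmxBr psd_form_eq0.
by apply: contra_eq_neq c1 => ->; rewrite form0l eq_sym oner_neq0.
Qed.

Lemma min_eigenvalue_le_form A lam u : A^T = A ->
  (forall a, eigenvalue A a -> lam <= a) -> lam * '[u] <= '[u]_A.
Proof.
move=> symA lam_le; have [->|u_neq0] := eqVneq u 0; first by rewrite !form0l mulr0.
have sphere0 : ([set v : 'rV[R]_n | '[v] = 1] !=set0)%classic.
  by exists ((Num.sqrt '[u])^-1 *: u); rewrite /= formZ_invsqrt // mulfV // form1_eq0.
have [c /[!inE] c1 c_min] := compact_EVT_min sphere0 sphere_compact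
  (continuous_subspaceT (@form_continuous A)).
have c_min' v : '[v] = 1 -> '[c]_A <= '[v]_A by move=> v1; apply: c_min; rewrite inE.
apply: le_trans (form_ge_sphere_min c_min' u); apply: ler_wpM2r; first exact: form1_ge0.
exact/lam_le/eigenvalue_sphere_min.
Qed.

End MinEigenvalue.

Section SimplexArgmin.
Variables (R : realType) (n : nat).
Implicit Types (G : 'M[R]_n) (d q v : 'cV[R]_n).

Lemma qobjE G d q : qobj G d q = '[q^T]_G - (q^T *m d) 0 0.
Proof. by rewrite /qobj form_mulmx trmxK. Qed.

Lemma qobj_first_order G d q v : G^T = G ->
  (forall t, 0 < t <= 1 -> qobj G d q <= qobj G d (q + t *: v)) ->
  0 <= 2 * '[q^T, v^T]_G - (v^T *m d) 0 0.
Proof.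
move=> symG q_min; apply: (ge0_from_affine_right (b := '[v^T]_G)) => t t01.
have := q_min t t01; rewrite !qobjE linearD linearZ /= -subr_ge0.
rewrite formDl !formDr !formZl !formZr /= (form_sym v^T q^T symG).
rewrite mulmxDl -scalemxAl !mxE.
move: t01 => /andP[t_gt0 _] expand; rewrite -(pmulr_rge0 _ t_gt0); nra.
Qed.

Lemma simplex_segment q q' t : simplex q -> simplex q' -> 0 <= t <= 1 ->
  simplex (q + t *: (q' - q)).
Proof.
move=> [q_sum q_ge0] [q'_sum q'_ge0] /andP[t_ge0 t_le1]; split.
  under eq_bigr do rewrite !mxE.
  by rewrite big_split /= -mulr_sumr sumrB q_sum q'_sum subrr mulr0 addr0.
by move=> s; rewrite !mxE; have := q_ge0 s; have := q'_ge0 s; nra.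
Qed.

Lemma argmin_simplex_first_order G d q q' : G^T = G ->
  is_argmin_simplex G d q -> simplex q' ->
  0 <= 2 * '[q^T, (q' - q)^T]_G - ((q' - q)^T *m d) 0 0.
Proof.
move=> symG [q_simplex q_min] q'_simplex; apply: qobj_first_order => // t /andP[t_gt0 t_le1].
by apply/q_min/simplex_segment => //; rewrite ltW.
Qed.

End SimplexArgmin.

Section EntrywiseBounds.
Variables (R : realType) (n : nat).
Implicit Types (E : 'M[R]_n) (e : 'cV[R]_n) (u v : 'rV[R]_n).

Definition l1norm u := \sum_i `|u 0 i|.

Lemma mnorm_inf_ge E i j : `|E i j| <= mnorm_inf E.
Proof. by apply/bigmax_geP; right; exists i => //; apply/bigmax_geP; right; exists j. Qed.

Lemma vnorm_inf_ge e i : `|e i 0| <= vnorm_inf e.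
Proof. by apply/bigmax_geP; right; exists i. Qed.

Lemma mnorm_inf_ge0 E : 0 <= mnorm_inf E.
Proof. exact: bigmax_ge_id. Qed.

Lemma vnorm_inf_ge0 e : 0 <= vnorm_inf e.
Proof. exact: bigmax_ge_id. Qed.

Lemma form_le_l1norm E u v : `|'[u, v]_E| <= mnorm_inf E * l1norm u * l1norm v.
Proof.
rewrite formE /l1norm -mulrA big_distrlr /= mulr_sumr.
apply: le_trans (ler_norm_sum _ _ _) _; apply: ler_sum => i _.
rewrite mulr_sumr; apply: le_trans (ler_norm_sum _ _ _) _; apply: ler_sum => j _.
have := mnorm_inf_ge E i j; have := mulr_ge0 (normr_ge0 (u 0 i)) (normr_ge0 (v 0 j)).
by rewrite !normrM; nra.
Qed.

Lemma dot_le_l1norm e u : `|(u *m e) 0 0| <= vnorm_inf e * l1norm u.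
Proof.
rewrite mxE /l1norm mulr_sumr; apply: le_trans (ler_norm_sum _ _ _) _.
by apply: ler_sum => i _; rewrite normrM mulrC ler_wpM2r ?vnorm_inf_ge.
Qed.

(* Cruder than Cauchy-Schwarz by a factor [sqrt n]; this is the factor [S] of the bound. *)
Lemma l1norm_le_sqrt u : l1norm u <= n%:R * Num.sqrt '[u].
Proof.
rewrite mulr_natl -[n in _ *+ n]card_ord -sumr_const; apply: ler_sum => i _.
by rewrite -sqrtr_sqr ler_wsqrtr ?coord_sqr_le_form1.
Qed.

End EntrywiseBounds.

Section Perturbation.
Variables (R : realType) (S : nat).
Implicit Types (G Gh : 'M[R]_S) (d dh q qs qh : 'cV[R]_S).

Lemma simplex_l1norm q : simplex q -> l1norm q^T = 1.
Proof.
by move=> [q_sum q_ge0]; rewrite -q_sum; apply: eq_bigr => s _; rewrite mxE ger0_norm.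
Qed.

Lemma norm2E (v : 'cV[R]_S) : norm2 v = Num.sqrt '[v^T].
Proof. by rewrite /norm2 form1E; congr Num.sqrt; apply: eq_bigr => s _; rewrite mxE. Qed.

Lemma argmin_simplex_perturbation G Gh d dh qs qh : G^T = G -> Gh^T = Gh ->
  is_argmin_simplex G d qs -> is_argmin_simplex Gh dh qh ->
  '[(qh - qs)^T]_G <=
    (mnorm_inf (Gh - G) + 2^-1 * vnorm_inf (dh - d)) * l1norm (qh - qs)^T.
Proof.
move=> symG symGh qs_min qh_min.
have opt_s := argmin_simplex_first_order symG qs_min qh_min.1.
have opt_h := argmin_simplex_first_order symGh qh_min qs_min.1.
set D := (qh - qs)^T in opt_s *.
have qsT : qs^T = qh^T - D by rewrite /D linearB /= opprB addrC subrK.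
have qsqhT : (qs - qh)^T = - D by rewrite /D -linearN /= opprB.
rewrite qsT formDl formNl in opt_s; rewrite qsqhT formNr mulNmx mxE in opt_h.
have := form_le_l1norm (Gh - G) qh^T D; rewrite (simplex_l1norm qh_min.1) mulr1.
rewrite formBmx ler_norml => /andP[form_ge _].
have dotB : (D *m (dh - d)) 0 0 = (D *m dh) 0 0 - (D *m d) 0 0 by rewrite mulmxBr !mxE.
have := dot_le_l1norm (dh - d) D; rewrite dotB ler_norml => /andP[_ dot_le].
lra.
Qed.

Lemma argmin_simplex_dist_le G Gh d dh qs qh lam : G^T = G -> Gh^T = Gh ->
  (forall a, eigenvalue G a -> lam <= a) -> 0 < lam ->
  is_argmin_simplex G d qs -> is_argmin_simplex Gh dh qh ->
  norm2 (qh - qs) <=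
    S%:R * (mnorm_inf (Gh - G) + 2^-1 * vnorm_inf (dh - d)) / lam.
Proof.
move=> symG symGh lam_le lam_gt0 qs_min qh_min; rewrite norm2E.
apply: (sqr_le_mul_bound lam_gt0 _ _ _ _ (l1norm_le_sqrt _)).
- by rewrite addr_ge0 ?mnorm_inf_ge0 // mulr_ge0 ?vnorm_inf_ge0 // invr_ge0 ler0n.
- exact: ler0n.
- exact: sqrtr_ge0.
rewrite sqr_sqrtr ?form1_ge0 //; apply: le_trans (min_eigenvalue_le_form _ symG lam_le) _.
exact: argmin_simplex_perturbation.
Qed.

Lemma simplex_coord_le1 q s : simplex q -> q s 0 <= 1.
Proof.
by move=> [q_sum q_ge0]; rewrite -q_sum (bigD1 s) //= lerDl sumr_ge0.
Qed.

Lemma simplex_dist_le_diam q q' : simplex q -> simplex q' ->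
  norm2 (q - q') <= simplex_diam R S.
Proof.
move=> q_simplex q'_simplex; apply: ub_le_sup; last by exists q, q'.
exists (Num.sqrt 2) => _ [p [p' [p_simplex p'_simplex ->]]].
rewrite ler_wsqrtr //; apply: le_trans (_ : _ <= \sum_s (p s 0 + p' s 0)) _.
  apply: ler_sum => s _; rewrite !mxE.
  have := simplex_coord_le1 s p_simplex; have := simplex_coord_le1 s p'_simplex.
  by have := p_simplex.2 s; have := p'_simplex.2 s; nra.
by rewrite big_split /= p_simplex.1 p'_simplex.1.
Qed.

End Perturbation.

Lemma tr_Gram (d : measure_display) (T : measurableType d) (R : realType)
  (P : probability T R) (S : nat) (tau : 'I_S -> T -> R) : (Gram P tau)^T = Gram P tau.
Proof.
apply/matrixP => i j; rewrite !mxE; congr (Rintegral _ _ _).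
by apply: funext => x; rewrite mulrC.
Qed.

Lemma tr_emp_Gram (T : Type) (R : realType) (S n : nat)
  (tauh : 'I_S -> T -> R) (X : 'I_n -> T) : (emp_Gram tauh X)^T = emp_Gram tauh X.
Proof.
apply/matrixP => i j; rewrite !mxE; congr (_ * _).
by apply: eq_bigr => k _; rewrite mulrC.
Qed.

Theorem lemma1 (d : measure_display) (T : measurableType d) (R : realType)
  (P : probability T R) (S nQ : nat)
  (tau tauh : 'I_S -> T -> R) (XQ : 'I_nQ -> T)
  (Htau_meas : forall s, measurable_fun setT (tau s))
  (Htau_L2 : forall s, P.-integrable setT (fun x => ((tau s x) ^+ 2)%:E))
  (HnQ : (0 < nQ)%N)
  (lam : R) (Hlam : is_lambda_min (Gram P tau) lam) (Hlam_pos : 0 < lam)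
  (qstar qhat : 'cV[R]_S)
  (Hqstar : is_argmin_simplex (Gram P tau) (diagv (Gram P tau)) qstar)
  (Hqhat : is_argmin_simplex (emp_Gram tauh XQ) (diagv (emp_Gram tauh XQ)) qhat) :
  norm2 (qhat - qstar) <=
    Num.min
      (S%:R * (mnorm_inf (emp_Gram tauh XQ - Gram P tau)
               + 2^-1 * vnorm_inf (diagv (emp_Gram tauh XQ) - diagv (Gram P tau)))
        / lam)
      (simplex_diam R S).
Proof.
rewrite le_min; apply/andP; split.
  exact: (argmin_simplex_dist_le (tr_Gram P tau) (tr_emp_Gram tauh XQ) Hlam.2).
exact: simplex_dist_le_diam Hqhat.1 Hqstar.1.
Qed.
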